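(* Let $n\in\mathbb{N}$, $A_1,\dots,A_n\in\mathscr{Q}$ and $\mathcal{A}=\{A_1,\dots,A_n\}$. Then for every $P_1\in\mathrm{Posi}(\mathcal{A})$ there exists $P_2\in\mathrm{Posi}'(A_1,\dots,A_n)$ with $P_2\subseteq P_1$.
   Context: Let $\mathcal{X}$ be a nonempty set and let $\mathscr{V}$ be the real vector space of all functions $u:\mathcal{X}\to\mathbb{R}$, with pointwise operations. Let $\mathscr{Q}$ be the set of all finite subsets of $\mathscr{V}$ (including $\emptyset$). For a positive integer $n$, $\mathbb{R}^{n,+}=\{\boldsymbol\lambda\in\mathbb{R}^n:\lambda_j\ge0\ \forall j,\ \sum_j\lambda_j>0\}$, and for $\boldsymbol\lambda\in\mathbb{R}^n$, $\mathbf u=(u_1,\dots,u_n)\in\mathscr{V}^n$, $\boldsymbol\lambda\mathbf u=\sum_{j=1}^n\lambda_ju_j$. $\mathbb{N}$ denotes the positive integers. For $\mathcal{A}\subseteq\mathscr{Q}$: $\mathrm{Posi}(\mathcal{A})=\{\{\boldsymbol\lambda(\mathbf u)\mathbf u:\mathbf u\in\times_{k=1}^mB_k\}: m\in\mathbb{N},\ B_1,\dots,B_m\in\mathcal A,\ \boldsymbol\lambda:\times_{k=1}^mB_k\to\mathbb{R}^{m,+}\}$. For a finite sequence $A_1,\dots,A_n\in\mathscr{Q}$ ($n\in\mathbb{N}$): $\mathrm{Posi}'(A_1,\dots,A_n)=\{\{\boldsymbol\lambda(\mathbf u)\mathbf u:\mathbf u\in\times_{j=1}^nA_j\}:\ \boldsymbol\lambda:\times_{j=1}^nA_j\to\mathbb{R}^{n,+}\}$.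 *)

From HB Require Import structures.
From mathcomp Require Import all_boot all_order all_algebra.
From mathcomp Require Import boolp classical_sets functions cardinality.
From Stdlib Require Import Rdefinitions.
From mathcomp Require Import Rstruct.
Set Implicit Arguments. Unset Strict Implicit. Unset Printing Implicit Defensive.
Import Order.TTheory GRing.Theory Num.Theory.
Local Open Scope classical_set_scope.
Local Open Scope ring_scope.

Definition Vsp (X : Type) := X -> R.

Definition lincomb (X : Type) (m : nat) (lam : 'I_m -> R) (u : 'I_m -> Vsp X)
  : Vsp X := fun x => \sum_(j < m) lam j * u j x.

Definition posvec (m : nat) (lam : 'I_m -> R) : Prop :=
  (forall j, 0 <= lam j) /\ 0 < \sum_(j < m) lam j.

Definition in_prod (X : Type) (m : nat) (B : 'I_m -> set (Vsp X))
  (u : 'I_m -> Vsp X) : Prop := forall k, B k (u k).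

Definition posi_img (X : Type) (m : nat) (B : 'I_m -> set (Vsp X))
  (lam : ('I_m -> Vsp X) -> 'I_m -> R) : set (Vsp X) :=
  [set v | exists u, in_prod B u /\ v = lincomb (lam u) u].

(* the map lambda : x_k B_k -> R^{m,+} (only its values on the product matter) *)
Definition admissible (X : Type) (m : nat) (B : 'I_m -> set (Vsp X))
  (lam : ('I_m -> Vsp X) -> 'I_m -> R) : Prop :=
  forall u, in_prod B u -> posvec (lam u).

Definition Qset (X : Type) : set (set (Vsp X)) := [set A | finite_set A].

Definition Posi (X : Type) (Acal : set (set (Vsp X))) : set (set (Vsp X)) :=
  [set P | exists (m : nat) (B : 'I_m -> set (Vsp X)),
     (0 < m)%nat /\ (forall k, Acal (B k)) /\
     exists lam, admissible B lam /\ P = posi_img B lam].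

Definition Posi' (X : Type) (n : nat) (A : 'I_n -> set (Vsp X)) : set (set (Vsp X)) :=
  [set P | exists lam, admissible A lam /\ P = posi_img A lam].

From HB Require Import structures.
From mathcomp Require Import all_boot all_order all_algebra.
From mathcomp Require Import boolp classical_sets functions cardinality.
From Stdlib Require Import Rdefinitions.
From mathcomp Require Import Rstruct.
Set Implicit Arguments. Unset Strict Implicit. Unset Printing Implicit Defensive.
Local Open Scope classical_set_scope.
Local Open Scope ring_scope.
Import GRing.Theory Num.Theory.

(* Every set P in Posi({A_1,...,A_n}) is built from a finite list B_1,...,B_m
   of members of {A_1,...,A_n}, possibly with repetitions and omissions; so
   B = A \o s for an index map s : 'I_m -> 'I_n.  Given u in the product of
   the A_j, the tuple u \o s lies in the product of the B_k, and
     lambda(u \o s) (u \o s) = (s_* lambda(u \o s)) u,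
   where the pushforward s_* mu sums, for each j, the weights mu_k over the
   fibre s^-1(j).  Pushforward preserves nonnegativity and the total sum, so
   u |-> s_* lambda(u \o s) is an admissible map on the product of the A_j,
   and the resulting element of Posi'(A_1,...,A_n) is contained in P.
   The file proves the factorisation of B, the two properties of the
   pushforward, and then derives the theorem. *)

Lemma factor_through_range (T : Type) (m n : nat) (A : 'I_n -> T)
    (B : 'I_m -> T) :
  (forall k, range A (B k)) -> exists s : 'I_m -> 'I_n, forall k, A (s k) = B k.
Proof.
move=> hB; have hfibre k : exists j, A j = B k.
  by case: (hB k) => j _ eAB; exists j.
by case: (choice hfibre) => s hs; exists s.
Qed.

Definition pushvec (m n : nat) (s : 'I_m -> 'I_n) (mu : 'I_m -> R) : 'I_n -> R :=
  fun j => \sum_(k < m | s k == j) mu k.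

Lemma sum_pushvec (m n : nat) (s : 'I_m -> 'I_n) (mu : 'I_m -> R) :
  \sum_(j < n) pushvec s mu j = \sum_(k < m) mu k.
Proof. by rewrite [RHS](partition_big s xpredT). Qed.

Lemma posvec_pushvec (m n : nat) (s : 'I_m -> 'I_n) (mu : 'I_m -> R) :
  posvec mu -> posvec (pushvec s mu).
Proof.
case=> mu_ge0 mu_pos; split; last by rewrite sum_pushvec.
by move=> j; apply: sumr_ge0 => k _; apply: mu_ge0.
Qed.

Lemma lincomb_reindex (X : Type) (m n : nat) (s : 'I_m -> 'I_n)
    (mu : 'I_m -> R) (u : 'I_n -> Vsp X) :
  lincomb mu (u \o s) = lincomb (pushvec s mu) u.
Proof.
apply: funext => x; rewrite /lincomb (partition_big s xpredT) //=.
apply: eq_bigr => j _; rewrite /pushvec mulr_suml.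
by apply: eq_big => [k|k /eqP <-].
Qed.

Theorem mainTheorem18 (X : Type) (hX : inhabited X) (n : nat) (hn : (0 < n)%nat)
  (A : 'I_n -> set (Vsp X)) (hA : forall j, @Qset X (A j)) :
  forall P1, Posi (range A) P1 ->
  exists P2, Posi' A P2 /\ P2 `<=` P1.
Proof.
move=> _ [m [B [_ [hB [lam [adm ->]]]]]].
have [s hsB] := factor_through_range hB.
have in_prodB : forall u, in_prod A u -> in_prod B (u \o s).
  by move=> u hu k; rewrite -hsB; apply: hu.
pose lam' u := pushvec s (lam (u \o s)).
exists (posi_img A lam'); split.
  exists lam'; split=> [u hu|//].
  exact: posvec_pushvec (adm _ (in_prodB u hu)).
move=> _ [u [hu ->]]; exists (u \o s); split; first exact: in_prodB hu.
by rewrite [RHS]lincomb_reindex.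
Qed.
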